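(* Let $A$ (in $\mathcal H$) and $B$ (in $\mathcal K$) be densely defined operators and suppose $A\dashv B$ with (possibly unbounded) intertwining operator $T$. If the resolvent set $\rho(A)$ is nonempty, then $T$ is bounded (and everywhere defined).
   Context: A closed densely defined operator $T:D(T)\subseteq\mathcal H\to\mathcal K$ is an intertwining operator for $A$ and $B$ if (io0) $D(A)\subseteq D(T)$ and $A\xi\in D(T)$ for all $\xi\in D(A)$ (i.e. $D(TA)=D(A)$); (io1) $TD(A)\subseteq D(B)$; (io2) $BT\xi=TA\xi$ for all $\xi\in D(A)$. $A\dashv B$ (quasi-similarity) means there is such an intertwining operator $T$ which is injective with densely defined inverse $T^{-1}$. $\rho(A)$ is the set of $\lambda\in\mathbb C$ such that $A-\lambda I$ is injective with bounded everywhere defined inverse. *)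

From Stdlib Require Import Reals.
Open Scope R_scope.

Record Cplx := mkC { re : R ; im : R }.
Definition C0 : Cplx := mkC 0 0.
Definition C1 : Cplx := mkC 1 0.
Definition Cadd (a b : Cplx) : Cplx := mkC (re a + re b) (im a + im b).
Definition Cmul (a b : Cplx) : Cplx :=
  mkC (re a * re b - im a * im b) (re a * im b + im a * re b).
Definition Cconj (a : Cplx) : Cplx := mkC (re a) (- im a).

Record HilbertSpace := {
  hcar :> Type;
  vzero : hcar;
  vadd : hcar -> hcar -> hcar;
  vopp : hcar -> hcar;
  vscal : Cplx -> hcar -> hcar;
  inner : hcar -> hcar -> Cplx;
  vaddA : forall x y z, vadd x (vadd y z) = vadd (vadd x y) z;
  vaddC : forall x y, vadd x y = vadd y x;
  vadd0 : forall x, vadd x vzero = x;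
  vaddN : forall x, vadd x (vopp x) = vzero;
  vscalA : forall a b x, vscal a (vscal b x) = vscal (Cmul a b) x;
  vscal1 : forall x, vscal C1 x = x;
  vscalDv : forall a x y, vscal a (vadd x y) = vadd (vscal a x) (vscal a y);
  vscalDs : forall a b x, vscal (Cadd a b) x = vadd (vscal a x) (vscal b x);
  (* inner product axioms (linear in the first argument) *)
  innerDl : forall x y z, inner (vadd x y) z = Cadd (inner x z) (inner y z);
  innerZl : forall a x y, inner (vscal a x) y = Cmul a (inner x y);
  innerC : forall x y, inner y x = Cconj (inner x y);
  inner_ge0 : forall x, 0 <= re (inner x x);
  inner_eq0 : forall x, inner x x = C0 -> x = vzero;
  hcomplete : forall u : nat -> hcar,
    (forall eps, 0 < eps -> exists N, forall n m, (n >= N)%nat -> (m >= N)%nat ->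
        sqrt (re (inner (vadd (u n) (vopp (u m))) (vadd (u n) (vopp (u m))))) < eps) ->
    exists l, forall eps, 0 < eps -> exists N, forall n, (n >= N)%nat ->
        sqrt (re (inner (vadd (u n) (vopp l)) (vadd (u n) (vopp l)))) < eps
}.

Arguments vzero {h}.
Arguments vadd {h}.
Arguments vopp {h}.
Arguments vscal {h}.
Arguments inner {h}.

Definition vsub {H : HilbertSpace} (x y : H) : H := vadd x (vopp y).
Definition hnorm {H : HilbertSpace} (x : H) : R := sqrt (re (inner x x)).

Definition converges_to {H : HilbertSpace} (u : nat -> H) (l : H) : Prop :=
  forall eps, 0 < eps -> exists N, forall n, (n >= N)%nat -> hnorm (vsub (u n) l) < eps.

Definition dense {H : HilbertSpace} (S : H -> Prop) : Prop :=
  forall x eps, 0 < eps -> exists y, S y /\ hnorm (vsub x y) < eps.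

(** * Partially defined operators: a domain and an action (meaningful on the domain) *)
Record Op (H K : HilbertSpace) := mkOp { dom : H -> Prop ; app : H -> K }.
Arguments dom {H K}.
Arguments app {H K}.

Definition is_linop {H K : HilbertSpace} (T : Op H K) : Prop :=
  dom T vzero /\
  (forall x y, dom T x -> dom T y -> dom T (vadd x y) /\
      app T (vadd x y) = vadd (app T x) (app T y)) /\
  (forall a x, dom T x -> dom T (vscal a x) /\ app T (vscal a x) = vscal a (app T x)).

Definition densely_defined {H K : HilbertSpace} (T : Op H K) : Prop :=
  is_linop T /\ dense (dom T).

Definition closed_op {H K : HilbertSpace} (T : Op H K) : Prop :=
  forall (u : nat -> H) (x : H) (y : K),
    (forall n, dom T (u n)) -> converges_to u x ->
    converges_to (fun n => app T (u n)) y ->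
    dom T x /\ app T x = y.

Definition intertwining {H K : HilbertSpace} (T : Op H K) (A : Op H H) (B : Op K K) : Prop :=
  closed_op T /\ densely_defined T /\
  (forall xi, dom A xi -> dom T xi /\ dom T (app A xi)) /\     (* io0 *)
  (forall xi, dom A xi -> dom B (app T xi)) /\                  (* io1 *)
  (forall xi, dom A xi -> app B (app T xi) = app T (app A xi)).  (* io2 *)

(** range of T, i.e. the domain of T^{-1} *)
Definition range {H K : HilbertSpace} (T : Op H K) (y : K) : Prop :=
  exists x, dom T x /\ app T x = y.

(** A ⊣ B via T: T intertwining, injective, with densely defined inverse *)
Definition quasi_similar_via {H K : HilbertSpace} (T : Op H K) (A : Op H H) (B : Op K K) : Prop :=
  intertwining T A B /\
  (forall x y, dom T x -> dom T y -> app T x = app T y -> x = y) /\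
  dense (range T).

Definition quasi_similar {H K : HilbertSpace} (A : Op H H) (B : Op K K) : Prop :=
  exists T : Op H K, quasi_similar_via T A B.

Definition in_resolvent {H : HilbertSpace} (A : Op H H) (lam : Cplx) : Prop :=
  (forall x y, dom A x -> dom A y ->
     vsub (app A x) (vscal lam x) = vsub (app A y) (vscal lam y) -> x = y) /\
  exists Rl : H -> H,
    (forall y, dom A (Rl y) /\ vsub (app A (Rl y)) (vscal lam (Rl y)) = y) /\
    (exists M, forall y, hnorm (Rl y) <= M * hnorm y).

Definition everywhere_defined {H K : HilbertSpace} (T : Op H K) : Prop :=
  forall x, dom T x.

Definition bounded_op {H K : HilbertSpace} (T : Op H K) : Prop :=
  exists M, forall x, dom T x -> hnorm (app T x) <= M * hnorm x.

(* If [lam] is in the resolvent set, every vector is [A x - lam x] for some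
   [x] in [dom A]; by (io0) both [x] and [A x] lie in the subspace [dom T], so
   [T] is everywhere defined.  Being closed, it is then bounded by the closed
   graph theorem, which follows from Baire's theorem: some set
   [{x | |T x| <= n}] is dense in a ball, hence every [y] is approximated by
   vectors [v] with [|T v| <= L |y|], and summing such approximations of the
   successive errors gives [|T y| <= 2 L |y|] thanks to the closedness of [T].
   None of (io1), (io2), injectivity of [T] or density of its range is needed. *)

From Pilot Require Import Defs.
From Stdlib Require Import Reals Lra Lia.
From Stdlib Require Import IndefiniteDescription Classical.
Open Scope R_scope.

Definition RtoC (t : R) : Cplx := mkC t 0.

Lemma RtoC_mul a b : Cmul (RtoC a) (RtoC b) = RtoC (a * b).
Proof. unfold Cmul, RtoC; simpl; f_equal; ring. Qed.

Section VectorAlgebra.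
Context {V : HilbertSpace}.
Implicit Types x y z : V.

Lemma vadd0l x : vadd vzero x = x.
Proof. rewrite vaddC; apply vadd0. Qed.

Lemma vaddNl x : vadd (vopp x) x = vzero.
Proof. rewrite vaddC; apply vaddN. Qed.

Lemma vscal_C0 x : vscal Defs.C0 x = vzero.
Proof.
  assert (e : vscal Defs.C0 x = vadd (vscal Defs.C0 x) (vscal Defs.C0 x)).
  { rewrite <- vscalDs. f_equal. unfold Cadd, Defs.C0; simpl. f_equal; ring. }
  rewrite <- (vaddN _ (vscal Defs.C0 x)). rewrite e at 2.
  rewrite <- vaddA, vaddN, vadd0. reflexivity.
Qed.

Lemma vopp_scal x : vopp x = vscal (RtoC (-1)) x.
Proof.
  assert (e : vadd (vscal (RtoC (-1)) x) x = vzero).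
  { rewrite <- (vscal1 _ x) at 2. rewrite <- vscalDs, <- (vscal_C0 x).
    f_equal. unfold Cadd, Defs.C0, Defs.C1, RtoC; simpl. f_equal; ring. }
  rewrite <- (vadd0l (vopp x)), <- e, <- vaddA, vaddN, vadd0. reflexivity.
Qed.

Lemma vopp_add x y : vopp (vadd x y) = vadd (vopp x) (vopp y).
Proof. rewrite !vopp_scal. apply vscalDv. Qed.

Lemma vopp_opp x : vopp (vopp x) = x.
Proof.
  rewrite !vopp_scal, vscalA, RtoC_mul.
  transitivity (vscal Defs.C1 x); [|apply vscal1].
  f_equal. unfold RtoC, Defs.C1. f_equal; ring.
Qed.

Lemma vopp0 : vopp (@vzero V) = vzero.
Proof. rewrite <- (vadd0l (vopp vzero)). apply vaddN. Qed.

Lemma vsub0 x : vsub x vzero = x.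
Proof. unfold vsub; rewrite vopp0; apply vadd0. Qed.

Lemma vsubv x : vsub x x = vzero.
Proof. apply vaddN. Qed.

Lemma vsub_opp x y : vsub y x = vopp (vsub x y).
Proof. unfold vsub. rewrite vopp_add, vopp_opp, vaddC. reflexivity. Qed.

Lemma vsub_chasles x y z : vsub x z = vadd (vsub x y) (vsub y z).
Proof. unfold vsub. rewrite <- vaddA, (vaddA _ (vopp y)), vaddNl, vadd0l. reflexivity. Qed.

Lemma vsub_addl x y z : vsub (vadd x y) z = vadd (vsub x z) y.
Proof. unfold vsub. rewrite <- !vaddA. f_equal. apply vaddC. Qed.

Lemma vsub_addr x y z : vsub x (vadd y z) = vsub (vsub x y) z.
Proof. unfold vsub. rewrite vopp_add, vaddA. reflexivity. Qed.

Lemma vscal_sub a x y : vscal a (vsub x y) = vsub (vscal a x) (vscal a y).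
Proof.
  unfold vsub. rewrite vscalDv, !vopp_scal, !vscalA. do 2 f_equal.
  unfold Cmul, RtoC; simpl. f_equal; ring.
Qed.

Lemma vsub_sub_shift z u x1 x2 :
  vsub u (vsub x1 x2) = vsub (vsub (vadd z u) x1) (vsub z x2).
Proof.
  unfold vsub. rewrite !vopp_add, !vopp_opp.
  rewrite <- (vaddA _ z u (vopp x1)), (vaddC _ z), <- (vaddA _ (vadd u (vopp x1)) z).
  rewrite (vaddA _ z (vopp z) x2), vaddN, vadd0l, vaddA. reflexivity.
Qed.

End VectorAlgebra.

Section Norm.
Context {V : HilbertSpace}.
Implicit Types x y z : V.

Let rinner x y : R := re (inner x y).

Let rinnerDl x y z : rinner (vadd x y) z = rinner x z + rinner y z.
Proof. unfold rinner; rewrite innerDl; reflexivity. Qed.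

Let rinnerC x y : rinner x y = rinner y x.
Proof. unfold rinner; rewrite (innerC _ x y); reflexivity. Qed.

Let rinnerZl t x y : rinner (vscal (RtoC t) x) y = t * rinner x y.
Proof. unfold rinner; rewrite innerZl; simpl; ring. Qed.

Let rinnerDr x y z : rinner z (vadd x y) = rinner z x + rinner z y.
Proof. rewrite !(rinnerC z); apply rinnerDl. Qed.

Let rinnerZr t x y : rinner y (vscal (RtoC t) x) = t * rinner y x.
Proof. rewrite !(rinnerC y); apply rinnerZl. Qed.

Let rinner_ge0 x : 0 <= rinner x x.
Proof. apply inner_ge0. Qed.

Let sqr_hnorm x : hnorm x * hnorm x = rinner x x.
Proof. apply sqrt_sqrt, rinner_ge0. Qed.

Lemma hnorm_ge0 x : 0 <= hnorm x.
Proof. apply sqrt_pos. Qed.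

Lemma hnorm_scal t x : hnorm (vscal (RtoC t) x) = Rabs t * hnorm x.
Proof.
  unfold hnorm. fold (rinner (vscal (RtoC t) x) (vscal (RtoC t) x)) (rinner x x).
  rewrite rinnerZl, rinnerZr.
  replace (t * (t * rinner x x)) with (Rsqr t * rinner x x) by (unfold Rsqr; ring).
  rewrite sqrt_mult, sqrt_Rsqr_abs; [reflexivity | apply Rle_0_sqr | apply rinner_ge0].
Qed.

Lemma hnorm_opp x : hnorm (vopp x) = hnorm x.
Proof.
  rewrite vopp_scal, hnorm_scal.
  replace (Rabs (-1)) with 1 by (rewrite Rabs_left; lra). ring.
Qed.

Lemma hnorm0 : hnorm (@vzero V) = 0.
Proof.
  rewrite <- (vscal_C0 vzero). change Defs.C0 with (RtoC 0).
  rewrite hnorm_scal, Rabs_R0; ring.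
Qed.

Lemma quadratic_nonneg_coef_le a b c : 0 <= a -> 0 <= c ->
  (forall t, 0 <= a + 2 * t * b + t * t * c) -> b <= sqrt a * sqrt c.
Proof.
  intros Ha Hc Q.
  assert (discr : b * b <= a * c).
  { destruct (Rle_lt_or_eq_dec 0 c Hc) as [cpos|<-].
    - specialize (Q (- b / c)).
      replace (a + 2 * (- b / c) * b + (- b / c) * (- b / c) * c)
        with ((a * c - b * b) / c) in Q by (field; lra).
      apply (Rmult_le_compat_r c) in Q; [|lra].
      replace ((a * c - b * b) / c * c) with (a * c - b * b) in Q by (field; lra). lra.
    - destruct (Req_dec b 0) as [->|bn]; [nra|].
      specialize (Q (- (a + 1) / (2 * b))).
      replace (a + 2 * (- (a + 1) / (2 * b)) * b + - (a + 1) / (2 * b) * (- (a + 1) / (2 * b)) * 0)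
        with (-1) in Q by (field; auto). lra. }
  destruct (Rle_or_lt b 0).
  - pose proof (sqrt_pos a); pose proof (sqrt_pos c). nra.
  - rewrite <- sqrt_mult, <- (sqrt_square b) by lra. apply sqrt_le_1_alt; auto.
Qed.

Lemma cauchy_schwarz x y : re (inner x y) <= hnorm x * hnorm y.
Proof.
  apply quadratic_nonneg_coef_le; try apply rinner_ge0.
  intro t. pose proof (rinner_ge0 (vadd x (vscal (RtoC t) y))) as G.
  rewrite rinnerDl, !rinnerDr, !rinnerZl, !rinnerZr, (rinnerC y x) in G.
  unfold rinner in G. nra.
Qed.

Lemma hnorm_triangle x y : hnorm (vadd x y) <= hnorm x + hnorm y.
Proof.
  pose proof (cauchy_schwarz x y). pose proof (hnorm_ge0 x); pose proof (hnorm_ge0 y).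
  pose proof (sqr_hnorm x); pose proof (sqr_hnorm y).
  rewrite <- (sqrt_square (hnorm x + hnorm y)) by lra.
  unfold hnorm at 1. fold (rinner (vadd x y) (vadd x y)).
  apply sqrt_le_1_alt. rewrite rinnerDl, !rinnerDr, (rinnerC y x).
  fold (rinner x y) in *. nra.
Qed.

Lemma hnorm_sub_sym x y : hnorm (vsub x y) = hnorm (vsub y x).
Proof. rewrite (vsub_opp x y), hnorm_opp; reflexivity. Qed.

Lemma hnorm_sub_triangle x y z : hnorm (vsub x z) <= hnorm (vsub x y) + hnorm (vsub y z).
Proof. rewrite (vsub_chasles x y z). apply hnorm_triangle. Qed.

Lemma hnorm_sub_le x y : hnorm (vsub x y) <= hnorm x + hnorm y.
Proof. unfold vsub. rewrite <- (hnorm_opp y). apply hnorm_triangle. Qed.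

End Norm.

Lemma half_pow_pos n : 0 < (1/2)^n.
Proof. apply pow_lt; lra. Qed.

Lemma half_pow_vanishes C eps : 0 < eps ->
  exists N, forall n, (N <= n)%nat -> C * (1/2)^n < eps.
Proof.
  intro Heps.
  destruct (pow_lt_1_zero (1/2)) with (y := eps / (Rabs C + 1)) as [N HN].
  - rewrite Rabs_right; lra.
  - apply Rdiv_lt_0_compat; [lra | pose proof (Rabs_pos C); lra].
  - exists N. intros n Hn. specialize (HN n Hn).
    rewrite Rabs_right in HN by (apply Rle_ge, Rlt_le, half_pow_pos).
    pose proof (half_pow_pos n). pose proof (Rle_abs C). pose proof (Rabs_pos C).
    apply (Rmult_lt_compat_l (Rabs C + 1)) in HN; [|lra].
    replace ((Rabs C + 1) * (eps / (Rabs C + 1))) with eps in HN by (field; lra). nra.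
Qed.

Section Sequences.
Context {V : HilbertSpace}.
Implicit Types u : nat -> V.

Lemma converges_of_half_pow_bound u l C :
  (forall n, hnorm (vsub (u n) l) <= C * (1/2)^n) -> converges_to u l.
Proof.
  intros Hb eps Heps. destruct (half_pow_vanishes C eps Heps) as [N HN].
  exists N. intros n Hn. specialize (HN n Hn). specialize (Hb n). lra.
Qed.

Lemma dist_le_of_half_pow_steps u C :
  (forall k, hnorm (vsub (u (S k)) (u k)) <= C * (1/2)^k) ->
  forall m n, (m <= n)%nat -> hnorm (vsub (u n) (u m)) <= 2 * C * (1/2)^m.
Proof.
  intros Hstep m n Hmn. replace n with (m + (n - m))%nat by lia.
  assert (telescope : forall j, hnorm (vsub (u (m + j)%nat) (u m))
                                 <= 2 * C * ((1/2)^m - (1/2)^(m + j))).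
  { induction j as [|j IHj].
    - rewrite Nat.add_0_r, vsubv, hnorm0. lra.
    - rewrite Nat.add_succ_r.
      eapply Rle_trans; [apply (hnorm_sub_triangle _ (u (m + j)%nat))|].
      specialize (Hstep (m + j)%nat).
      change ((1/2)^(S (m + j))) with (1/2 * (1/2)^(m + j)). lra. }
  pose proof (telescope (n - m)%nat). pose proof (half_pow_pos (m + (n - m))).
  assert (0 <= C).
  { specialize (Hstep m). pose proof (hnorm_ge0 (vsub (u (S m)) (u m))).
    pose proof (half_pow_pos m). nra. }
  nra.
Qed.

Lemma cauchy_limit_within u (b : nat -> R) :
  (forall m n, (m <= n)%nat -> hnorm (vsub (u n) (u m)) <= b m) ->
  (forall eps, 0 < eps -> exists N, b N < eps) ->
  exists l, converges_to u l /\ forall m, hnorm (vsub l (u m)) <= b m.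
Proof.
  intros Hd Hb.
  destruct (hcomplete V u) as [l Hl].
  { intros eps Heps. destruct (Hb (eps / 2)) as [N HN]; [lra|]. exists N.
    intros n m Hn Hm. change (hnorm (vsub (u n) (u m)) < eps).
    pose proof (hnorm_sub_triangle (u n) (u N) (u m)).
    pose proof (Hd N n Hn). pose proof (Hd N m Hm) as HmN.
    rewrite hnorm_sub_sym in HmN. lra. }
  exists l. split; [exact Hl|].
  intro m. apply Rle_plus_epsilon. intros eps Heps.
  destruct (Hl eps Heps) as [N HN]. specialize (HN (m + N)%nat ltac:(lia)).
  change (hnorm (vsub (u (m + N)%nat) l) < eps) in HN.
  pose proof (hnorm_sub_triangle l (u (m + N)%nat) (u m)).
  pose proof (Hd m (m + N)%nat ltac:(lia)). rewrite hnorm_sub_sym in HN. lra.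
Qed.

End Sequences.

Section Baire.
Context {V : HilbertSpace}.

Definition dense_in_ball (S : V -> Prop) (z : V) (r : R) : Prop :=
  forall w, hnorm (vsub w z) < r -> forall s, 0 < s ->
    exists x, S x /\ hnorm (vsub x w) < s.

Lemma closed_ball_avoiding (S : V -> Prop) z r : 0 < r -> ~ dense_in_ball S z r ->
  exists w rho, 0 < rho /\ hnorm (vsub w z) + 2 * rho <= r /\
    forall x, hnorm (vsub x w) <= rho -> ~ S x.
Proof.
  intros Hr ND. unfold dense_in_ball in ND.
  apply not_all_ex_not in ND as [w ND]. apply imply_to_and in ND as [Hw ND].
  apply not_all_ex_not in ND as [s ND]. apply imply_to_and in ND as [Hs ND].
  exists w, (Rmin (s / 2) ((r - hnorm (vsub w z)) / 2)).
  pose proof (Rmin_l (s / 2) ((r - hnorm (vsub w z)) / 2)).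
  pose proof (Rmin_r (s / 2) ((r - hnorm (vsub w z)) / 2)).
  split; [apply Rmin_glb_lt; lra|]. split; [lra|].
  intros x Hx Sx. apply ND. exists x. split; [exact Sx | lra].
Qed.

(* Nested closed balls avoiding [P 0], [P 1], ... have radii below [(1/2)^k];
   their centres converge to a point that no [P n] can contain. *)
Lemma baire_dense_in_ball (P : nat -> V -> Prop) :
  (forall x, exists n, P n x) ->
  exists n z r, 0 < r /\ dense_in_ball (P n) z r.
Proof.
  intro Hcov. apply NNPP; intro NE.
  assert (step : forall kb : nat * (V * R), exists b : V * R, 0 < snd (snd kb) ->
     0 < snd b /\ hnorm (vsub (fst b) (fst (snd kb))) + 2 * snd b <= snd (snd kb) /\
     forall x, hnorm (vsub x (fst b)) <= snd b -> ~ P (fst kb) x).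
  { intros [k [z r]]; simpl.
    destruct (Rlt_or_le 0 r) as [rpos|rnonpos]; [| exists (z, r); simpl; intro; lra].
    destruct (closed_ball_avoiding (P k) z r rpos) as [w [rho Hw]].
    { intro D. apply NE. exists k, z, r. auto. }
    exists (w, rho). auto. }
  apply functional_choice in step as [f Hf].
  set (ball := fix ball k := match k with O => (vzero, 1) | S k => f (k, ball k) end).
  set (c k := fst (ball k)). set (r k := snd (ball k)).
  assert (rpos : forall k, 0 < r k).
  { induction k; [unfold r, ball; simpl; lra|]. apply (Hf (k, ball k)). exact IHk. }
  assert (Hball : forall k, hnorm (vsub (c (S k)) (c k)) + 2 * r (S k) <= r k /\
      forall x, hnorm (vsub x (c (S k))) <= r (S k) -> ~ P k x).
  { intro k. destruct (Hf (k, ball k)) as [_ [A B]]; [apply rpos|]. split; [exact A | exact B]. }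
  assert (rsmall : forall k, r k <= 1 * (1/2)^k).
  { induction k; [unfold r, ball; simpl; lra|]. destruct (Hball k) as [A _].
    pose proof (hnorm_ge0 (vsub (c (S k)) (c k))).
    change ((1/2)^(S k)) with (1/2 * (1/2)^k). lra. }
  assert (nested : forall m j, hnorm (vsub (c (m + j)%nat) (c m)) + r (m + j)%nat <= r m).
  { intros m j. induction j as [|j IHj].
    - rewrite Nat.add_0_r, vsubv, hnorm0. lra.
    - rewrite Nat.add_succ_r. destruct (Hball (m + j)%nat) as [A _].
      pose proof (hnorm_sub_triangle (c (S (m + j))) (c (m + j)%nat) (c m)).
      pose proof (rpos (S (m + j))). lra. }
  destruct (cauchy_limit_within c r) as [l [_ Hl]].
  - intros m n Hmn. replace n with (m + (n - m))%nat by lia.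
    pose proof (nested m (n - m)%nat). pose proof (rpos (m + (n - m))%nat). lra.
  - intros eps Heps. destruct (half_pow_vanishes 1 eps Heps) as [N HN].
    exists N. specialize (HN N (le_n N)). specialize (rsmall N). lra.
  - destruct (Hcov l) as [n Pn]. destruct (Hball n) as [_ B]. exact (B l (Hl (S n)) Pn).
Qed.

End Baire.

Section ClosedGraph.
Context {H K : HilbertSpace} (T : Op H K).
Hypothesis Ttotal : everywhere_defined T.
Hypothesis Tlin : is_linop T.

Lemma app_add x y : app T (vadd x y) = vadd (app T x) (app T y).
Proof. destruct Tlin as [_ [Hadd _]]. apply Hadd; apply Ttotal. Qed.

Lemma app_scal a x : app T (vscal a x) = vscal a (app T x).
Proof. destruct Tlin as [_ [_ Hscal]]. apply Hscal; apply Ttotal. Qed.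

Lemma app_sub x y : app T (vsub x y) = vsub (app T x) (app T y).
Proof. unfold vsub. rewrite app_add, !vopp_scal, app_scal. reflexivity. Qed.

Lemma app0 : app T vzero = vzero.
Proof. rewrite <- (vscal_C0 (@vzero H)), app_scal. apply vscal_C0. Qed.

Definition approx_bounded (L : R) : Prop :=
  forall y eps, 0 < eps ->
    exists v, hnorm (vsub y v) < eps /\ hnorm (app T v) <= L * hnorm y.

(* Rescale [y] to the vector [u] of norm [r/2] and write it as a difference of
   two points of the dense set, one near [z + u] and one near [z]. *)
Lemma approx_bounded_of_dense_in_ball N z r : 0 < r ->
  dense_in_ball (fun x => hnorm (app T x) <= N) z r -> approx_bounded (4 * N / r).
Proof.
  intros Hr D y eps Heps.
  destruct (Rle_lt_or_eq_dec 0 (hnorm y) (hnorm_ge0 y)) as [ypos|y0].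
  2:{ exists vzero. rewrite vsub0, <- y0, app0, hnorm0. lra. }
  assert (Hz : hnorm (vsub z z) < r) by (rewrite vsubv, hnorm0; lra).
  set (c := r / (2 * hnorm y)).
  assert (cpos : 0 < c) by (unfold c; apply Rdiv_lt_0_compat; lra).
  set (u := vscal (RtoC c) y).
  assert (Hu : hnorm (vsub (vadd z u) z) < r).
  { rewrite vsub_addl, vsubv, vadd0l. unfold u.
    rewrite hnorm_scal, Rabs_right by lra. unfold c. field_simplify; lra. }
  destruct (D _ Hu (c * eps / 2)) as [x1 [B1 A1]]; [nra|].
  destruct (D z Hz (c * eps / 2)) as [x2 [B2 A2]]; [nra|].
  assert (N0 : 0 <= N) by (pose proof (hnorm_ge0 (app T x2)); lra).
  assert (ey : y = vscal (RtoC (1 / c)) u).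
  { unfold u. rewrite vscalA, RtoC_mul. replace (1 / c * c) with 1 by (field; lra).
    symmetry; apply vscal1. }
  assert (Hc : Rabs (1 / c) = 1 / c) by (apply Rabs_right; apply Rle_ge, Rlt_le, Rdiv_lt_0_compat; lra).
  exists (vscal (RtoC (1 / c)) (vsub x1 x2)). split.
  - rewrite ey at 1. rewrite <- vscal_sub, hnorm_scal, Hc, (vsub_sub_shift z).
    pose proof (hnorm_sub_le (vsub (vadd z u) x1) (vsub z x2)) as Hsum.
    rewrite (hnorm_sub_sym (vadd z u)), (hnorm_sub_sym z) in Hsum.
    apply (Rmult_lt_reg_l c); auto.
    replace (c * (1 / c * hnorm (vsub (vsub (vadd z u) x1) (vsub z x2))))
      with (hnorm (vsub (vsub (vadd z u) x1) (vsub z x2))) by (field; lra). lra.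
  - rewrite app_scal, hnorm_scal, Hc, app_sub.
    pose proof (hnorm_sub_le (app T x1) (app T x2)).
    replace (4 * N / r * hnorm y) with (1 / c * (2 * N)) by (unfold c; field; lra).
    apply Rmult_le_compat_l; [apply Rlt_le, Rdiv_lt_0_compat|]; lra.
Qed.

(* [s] is the sequence of partial sums of approximations of the successive
   errors [y - s k]; the error halves at each step. *)
Lemma approx_series L y e : 0 <= L -> approx_bounded L -> hnorm y < e ->
  exists s : nat -> H, s O = vzero /\
    (forall k, hnorm (vsub (s k) y) <= e * (1/2)^k) /\
    (forall k, hnorm (vsub (app T (s (S k))) (app T (s k))) <= L * e * (1/2)^k).
Proof.
  intros HL Happ Hy.
  assert (He : 0 < e) by (pose proof (hnorm_ge0 y); lra).
  assert (choice : forall p : H * nat, exists v,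
      hnorm (vsub (fst p) v) < e * (1/2)^(S (snd p)) /\ hnorm (app T v) <= L * hnorm (fst p)).
  { intros [w k]. apply Happ. apply Rmult_lt_0_compat; [lra | apply half_pow_pos]. }
  apply functional_choice in choice as [g Hg].
  set (s := fix s k := match k with O => vzero | S k => vadd (s k) (g (vsub y (s k), k)) end).
  assert (rest : forall k, hnorm (vsub y (s k)) <= e * (1/2)^k).
  { induction k as [|k IHk].
    - cbn. rewrite vsub0. lra.
    - change (s (S k)) with (vadd (s k) (g (vsub y (s k), k))).
      rewrite vsub_addr. apply Rlt_le, (Hg (vsub y (s k), k)). }
  exists s. split; [reflexivity|]. split.
  - intro k. rewrite hnorm_sub_sym. apply rest.
  - intro k. change (s (S k)) with (vadd (s k) (g (vsub y (s k), k))).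
    rewrite app_add, vsub_addl, vsubv, vadd0l.
    destruct (Hg (vsub y (s k), k)) as [_ B]. cbn [fst] in B.
    specialize (rest k). apply (Rmult_le_compat_l L) in rest; [|exact HL]. lra.
Qed.

Hypothesis Tclosed : closed_op T.

Lemma approx_bounded_le L y e : 0 <= L -> approx_bounded L -> hnorm y < e ->
  hnorm (app T y) <= 2 * L * e.
Proof.
  intros HL Happ Hy.
  destruct (approx_series L y e HL Happ Hy) as [s [s0 [Hs HTs]]].
  destruct (cauchy_limit_within (fun k => app T (s k)) (fun m => 2 * (L * e) * (1/2)^m))
    as [l [Hl Hl0]].
  - apply dist_le_of_half_pow_steps. exact HTs.
  - intros eps Heps. destruct (half_pow_vanishes (2 * (L * e)) eps Heps) as [N HN].
    exists N. apply HN, le_n.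
  - destruct (Tclosed s y l) as [_ <-]; [intro; apply Ttotal | |exact Hl|].
    + apply (converges_of_half_pow_bound s y e Hs).
    + specialize (Hl0 O). rewrite s0, app0, vsub0 in Hl0. simpl in Hl0. lra.
Qed.

Theorem closed_graph : bounded_op T.
Proof.
  destruct (baire_dense_in_ball (fun n x => hnorm (app T x) <= INR n)) as [n [z [r [Hr D]]]].
  { intro x. destruct (INR_archimed 1 (hnorm (app T x))) as [n Hn]; [lra|].
    exists n. lra. }
  set (L := 4 * INR n / r).
  assert (HL : 0 <= L).
  { unfold L. apply Rmult_le_pos; [pose proof (pos_INR n); lra | apply Rlt_le, Rinv_0_lt_compat; lra]. }
  pose proof (approx_bounded_of_dense_in_ball (INR n) z r Hr D) as Happ.
  exists (2 * L). intros x _.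
  apply Rle_plus_epsilon. intros eps Heps.
  set (delta := eps / (2 * L + 1)).
  assert (Hdelta : 2 * L * delta <= eps).
  { unfold delta. apply (Rmult_le_reg_r (2 * L + 1)); [lra|].
    replace (2 * L * (eps / (2 * L + 1)) * (2 * L + 1)) with (2 * L * eps) by (field; lra). nra. }
  assert (0 < delta) by (apply Rdiv_lt_0_compat; lra).
  assert (hnorm (app T x) <= 2 * L * (hnorm x + delta))
    by (apply (approx_bounded_le L x _ HL Happ); lra).
  lra.
Qed.

End ClosedGraph.

Lemma everywhere_defined_of_resolvent {H K : HilbertSpace} (A : Op H H) (T : Op H K) lam :
  is_linop T -> (forall xi, dom A xi -> dom T xi /\ dom T (app A xi)) ->
  in_resolvent A lam -> everywhere_defined T.
Proof.
  intros [_ [Tadd Tscal]] io0 [_ [Rl [HR _]]] y.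
  destruct (HR y) as [DA <-]. destruct (io0 _ DA) as [D1 D2].
  unfold vsub. rewrite vopp_scal. apply Tadd; [exact D2|].
  apply Tscal, Tscal, D1.
Qed.

Theorem proposition3p17 (H K : HilbertSpace) (A : Op H H) (B : Op K K) (T : Op H K) :
  densely_defined A -> densely_defined B ->
  quasi_similar_via T A B ->
  (exists lam : Cplx, in_resolvent A lam) ->
  everywhere_defined T /\ bounded_op T.
Proof.
  intros _ _ [[Tclosed [[Tlin _] [io0 _]]] _] [lam Hlam].
  pose proof (everywhere_defined_of_resolvent A T lam Tlin io0 Hlam) as Ttotal.
  split; [exact Ttotal | exact (closed_graph T Ttotal Tlin Tclosed)].
Qed.
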